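(* Let $d\ge1$, $A=d$, and consider the MDP and model class described in the context. Let $\theta\in[-1,1]^d$ be arbitrary (e.g., the parameter output by any, possibly stochastic, algorithm that outputs a model $T_\theta$ in the class), and let $\pi_\theta$ be the greedy policy with respect to $T_\theta$, with ties broken uniformly at random. Then $$\max_{\pi}\eta(T^\star,\pi)-\eta(T^\star,\pi_\theta)\ge\frac{(A-1)\gamma^2}{A(1-\gamma)}.$$
   Context: MDP: states $\mathcal{S}=\{s_0,s_1,\dots,s_d\}\cup\{s_g,s_b\}$, actions $a_1,\dots,a_d$ ($A=d$ actions), discount $\gamma\in[0,1)$, fixed initial state $s_0$. True deterministic dynamics $T^\star$: $T^\star(s_0,a_i)=s_i$; $T^\star(s_i,a_j)=s_g$ if $i=j$ and $s_b$ if $i\ne j$ ($i,j\in[d]$); $T^\star(s_g,a_i)=s_g$, $T^\star(s_b,a_i)=s_b$. Reward $r(s,a_i)=\mathbf{1}\{s=s_g\}$. For a policy $\pi$ and dynamics $T$, $\eta(T,\pi)=\mathbb{E}[\sum_{t\ge0}\gamma^t r(s_t,a_t)\mid s_0,\ a_t\sim\pi(s_t),\ s_{t+1}\sim T(s_t,a_t)]$. Model class $\{T_\theta:\theta\in[-1,1]^d\}$: for $i,j\in[d]$, $T_\theta(s_i,a_j)=s_g$ with probability $\frac12(1+e_j^\top\theta)$ and $s_b$ with probability $\frac12(1-e_j^\top\theta)$, where $e_j$ is the $j$-th standard basis vector; on $s_0,s_g,s_b$, $T_\theta$ coincides with $T^\star$. The greedy policy $\pi_\theta$ w.r.t. $T_\theta$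 is the optimal policy of the MDP with dynamics $T_\theta$ and reward $r$, where at each state it selects uniformly at random among the actions maximizing the optimal $Q$-function of $T_\theta$. The maximum over $\pi$ ranges over all policies. *)

From HB Require Import structures.
From mathcomp Require Import all_boot all_order all_algebra.
From mathcomp Require Import all_classical all_reals all_analysis.
Set Implicit Arguments. Unset Strict Implicit. Unset Printing Implicit Defensive.
Import Order.TTheory GRing.Theory Num.Theory numFieldNormedType.Exports.
Local Open Scope ring_scope.
Local Open Scope classical_set_scope.

Section MDP.
Variables (R : realType) (S A : finType).

(* dynamics T s a s' = probability of moving to s' from s under a;
   a (stationary, stochastic) policy pi s a = probability of playing a in s *)
Definition is_policy (pi : S -> A -> R) : Prop :=
  forall s, (forall a, 0 <= pi s a) /\ \sum_(a : A) pi s a = 1.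

Fixpoint state_dist (T : S -> A -> S -> R) (pi : S -> A -> R) (mu0 : S -> R)
    (t : nat) : S -> R :=
  match t with
  | 0 => mu0
  | t'.+1 => fun s' => \sum_(s : S) \sum_(a : A)
                 state_dist T pi mu0 t' s * pi s a * T s a s'
  end.

Definition disc_return (T : S -> A -> S -> R) (pi : S -> A -> R) (r : S -> A -> R)
    (gamma : R) (mu0 : S -> R) : R :=
  limn (series (fun t : nat => (gamma ^+ t *
     \sum_(s : S) \sum_(a : A) state_dist T pi mu0 t s * pi s a * r s a : R))).

Definition dirac_st (x : S) : S -> R := fun s => if s == x then 1 else 0.

Definition eta_val (T : S -> A -> S -> R) (pi : S -> A -> R) (r : S -> A -> R)
    (gamma : R) (x : S) : R := disc_return T pi r gamma (dirac_st x).

Definition opt_value (T : S -> A -> S -> R) (r : S -> A -> R) (gamma : R) (x : S) : R :=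
  sup [set eta_val T pi r gamma x | pi in is_policy].

Definition Qpi (T : S -> A -> S -> R) (pi : S -> A -> R) (r : S -> A -> R)
    (gamma : R) (s : S) (a : A) : R :=
  r s a + gamma * \sum_(s' : S) T s a s' * eta_val T pi r gamma s'.

Definition Qstar (T : S -> A -> S -> R) (r : S -> A -> R) (gamma : R)
    (s : S) (a : A) : R :=
  sup [set Qpi T pi r gamma s a | pi in is_policy].

Definition greedy_set (T : S -> A -> S -> R) (r : S -> A -> R) (gamma : R)
    (s : S) : {set A} :=
  [set a | [forall b, Qstar T r gamma s b <= Qstar T r gamma s a]].

Definition greedy (T : S -> A -> S -> R) (r : S -> A -> R) (gamma : R) :
    S -> A -> R :=
  fun s a => if a \in greedy_set T r gamma s
             then (#|greedy_set T r gamma s|%:R)^-1 else 0.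
End MDP.

Inductive state (d : nat) := st0 | sti of 'I_d | stg | stb.
Arguments st0 {d}. Arguments stg {d}. Arguments stb {d}.

Definition state_enc d (s : state d) : option (option (option 'I_d)) :=
  match s with
  | st0 => None | stg => Some None | stb => Some (Some None)
  | sti i => Some (Some (Some i)) end.
Definition state_dec d (o : option (option (option 'I_d))) : state d :=
  match o with
  | None => st0 | Some None => stg | Some (Some None) => stb
  | Some (Some (Some i)) => sti i end.
Lemma state_encK d : cancel (@state_enc d) (@state_dec d).
Proof. by case. Qed.
HB.instance Definition _ d := Equality.copy (state d) (can_type (@state_encK d)).
HB.instance Definition _ d := Choice.copy (state d) (can_type (@state_encK d)).
HB.instance Definition _ d := Countable.copy (state d) (can_type (@state_encK d)).
HB.instance Definition _ d := Finite.copy (state d) (can_type (@state_encK d)).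

Section Instance.
Variables (R : realType) (d : nat).

Definition next (s : state d) (a : 'I_d) : state d :=
  match s with
  | st0 => sti a
  | sti i => if i == a then stg else stb
  | stg => stg
  | stb => stb
  end.
Definition Tstar (s : state d) (a : 'I_d) (s' : state d) : R :=
  if s' == next s a then 1 else 0.

Definition Ttheta (theta : 'I_d -> R) (s : state d) (a : 'I_d) (s' : state d) : R :=
  match s with
  | sti _ => if s' == stg then (1 + theta a) / 2
             else if s' == stb then (1 - theta a) / 2 else 0
  | _ => Tstar s a s'
  end.

Definition rew (s : state d) (a : 'I_d) : R := if s == stg then 1 else 0.
End Instance.

From HB Require Import structures.
From mathcomp Require Import all_boot all_order all_algebra.
From mathcomp Require Import all_classical all_reals all_analysis.
From mathcomp Require Import ring.
Set Implicit Arguments. Unset Strict Implicit. Unset Printing Implicit Defensive.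
Import Order.TTheory GRing.Theory Num.Theory numFieldNormedType.Exports.
Local Open Scope ring_scope.
Local Open Scope classical_set_scope.

(** Under the model [T_theta] the states [s_1, ..., s_d] have the same
  transitions and rewards, and each [s_i] is entered only from [s_0], through
  [a_i].  Relabelling a policy (playing at [s_j] what it played at [s_i])
  therefore shows that all actions at [s_0] have the same optimal Q-value,
  so the greedy policy is uniform at [s_0] and identical at all the [s_i].
  Under the true dynamics, any policy reaches [s_g] at time 2 with
  probability [p = sum_i pi(s_0, a_i) pi(s_i, a_i)] and stays there, so its
  value is [gamma^2 p / (1 - gamma)]; the greedy policy has [p = 1/d] while the
  policy playing [a_i] at [s_i] has [p = 1]. *)

Section DiscountedSums.
Variable R : realType.

Lemma lim_series_discounted_delayed (gamma c : R) (k : nat) (u : nat -> R) :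
  `|gamma| < 1 -> (forall t, (t < k)%N -> u t = 0) ->
  (forall t, u (t + k)%N = c) ->
  limn (series (fun t => gamma ^+ t * u t)) = gamma ^+ k * c / (1 - gamma).
Proof.
move=> gamma_lt1 u_early u_late; apply/cvg_lim => //; rewrite -(cvg_shiftn k).
suff -> : (fun n => series (fun t => gamma ^+ t * u t) (n + k)%N)
          = series (geometric (gamma ^+ k * c) gamma).
  exact: cvg_geometric_series.
apply/funext; elim=> [|n IH].
  rewrite add0n /series /= big_nat_cond big1 ?big_geq // => t.
  by case/andP=> /andP[_ /u_early->]; rewrite mulr0.
rewrite addSn !seriesSr IH u_late /geometric /= exprD; ring.
Qed.

End DiscountedSums.

Section FiniteMDP.
Variables (R : realType) (S A : finType).
Implicit Types (T : S -> A -> S -> R) (pi : S -> A -> R) (r : S -> A -> R).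

Definition expected_reward T pi r (mu : S -> R) (t : nat) : R :=
  \sum_s \sum_a state_dist T pi mu t s * pi s a * r s a.

Lemma eta_valE T pi r gamma x :
  eta_val T pi r gamma x =
  limn (series (fun t => gamma ^+ t * expected_reward T pi r (dirac_st R x) t)).
Proof. by []. Qed.

Lemma state_distS T pi mu t s' :
  state_dist T pi mu t.+1 s' =
  \sum_s \sum_a state_dist T pi mu t s * pi s a * T s a s'.
Proof. by []. Qed.

Lemma sum_dirac_st_policy x pi (G : S -> A -> R) :
  \sum_s \sum_a dirac_st R x s * pi s a * G s a = \sum_a pi x a * G x a.
Proof.
rewrite (bigD1 x) //= [X in _ + X]big1 ?addr0.
  by apply: eq_bigr => a _; rewrite /dirac_st eqxx mul1r.
by move=> s /negbTE sx; apply: big1 => a _; rewrite /dirac_st sx !mul0r.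
Qed.

Lemma sum_mul_dirac_st (x : S) (F : S -> R) : \sum_s F s * dirac_st R x s = F x.
Proof.
rewrite (bigD1 x) //= [X in _ + X]big1 ?addr0.
  by rewrite /dirac_st eqxx mulr1.
by move=> s /negbTE sx; rewrite /dirac_st sx mulr0.
Qed.

Lemma state_dist_dirac1 T pi x s' :
  state_dist T pi (dirac_st R x) 1 s' = \sum_a pi x a * T x a s'.
Proof. exact: sum_dirac_st_policy. Qed.

Lemma expected_reward_dirac0 T pi r x :
  expected_reward T pi r (dirac_st R x) 0 = \sum_a pi x a * r x a.
Proof. exact: sum_dirac_st_policy. Qed.

Lemma flow_eq0 T pi mu t s a y :
  (T s a y != 0 -> state_dist T pi mu t s = 0) ->
  state_dist T pi mu t s * pi s a * T s a y = 0.
Proof.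
move=> no_inflow; have [->|/no_inflow->] := eqVneq (T s a y) 0.
  by rewrite mulr0.
by rewrite !mul0r.
Qed.

Lemma state_dist_no_inflow T pi mu t y :
  (forall s a, T s a y != 0 -> state_dist T pi mu t s = 0) ->
  state_dist T pi mu t.+1 y = 0.
Proof.
move=> no_inflow; apply: big1 => s _; apply: big1 => a _.
exact/flow_eq0/no_inflow.
Qed.

Lemma state_dist_absorbing T pi mu t g :
  is_policy pi -> (forall a, T g a g = 1) ->
  (forall s a, s != g -> T s a g != 0 -> state_dist T pi mu t s = 0) ->
  state_dist T pi mu t.+1 g = state_dist T pi mu t g.
Proof.
move=> pi_pol Tgg no_inflow.
rewrite state_distS (bigD1 g) //= [X in _ + X]big1 ?addr0.
  under eq_bigr => a _ do rewrite Tgg mulr1.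
  by rewrite -big_distrr /= (proj2 (pi_pol g)) mulr1.
by move=> s sg; apply: big1 => a _; apply/flow_eq0/no_inflow.
Qed.

Lemma expected_reward_indicator T pi mu t g :
  is_policy pi ->
  expected_reward T pi (fun s _ => dirac_st R g s) mu t
  = state_dist T pi mu t g.
Proof.
move=> pi_pol; rewrite /expected_reward (bigD1 g) //= [X in _ + X]big1 ?addr0.
  under eq_bigr => a _ do rewrite /dirac_st eqxx mulr1.
  by rewrite -big_distrr /= (proj2 (pi_pol g)) mulr1.
by move=> s /negbTE sg; apply: big1 => a _; rewrite /dirac_st sg mulr0.
Qed.

Lemma policy_le1 pi s a : is_policy pi -> pi s a <= 1.
Proof.
move=> pi_pol; have [pi_ge0 pi_sum1] := pi_pol s.
by rewrite -pi_sum1 (bigD1 a) //= lerDl sumr_ge0.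
Qed.

Lemma dirac_policy (f : S -> A) : is_policy (fun s => dirac_st R (f s)).
Proof.
move=> s; split=> [a|]; first by rewrite /dirac_st; case: eqP.
rewrite (bigD1 (f s)) //= [X in _ + X]big1 ?addr0 /dirac_st ?eqxx //.
by move=> a /negbTE ->.
Qed.

Lemma Qpi_det T pi r gamma s a x :
  T s a =1 dirac_st R x ->
  Qpi T pi r gamma s a = r s a + gamma * eta_val T pi r gamma x.
Proof.
move=> Tsa; rewrite /Qpi; congr (_ + gamma * _).
by under eq_bigr => s' _ do rewrite Tsa mulrC; rewrite sum_mul_dirac_st.
Qed.

Lemma greedy_is_policy T r gamma (a0 : A) : is_policy (greedy T r gamma).
Proof.
move=> s; have [a _ a_max] := @arg_maxP _ _ _ a0 xpredT (Qstar T r gamma s) isT.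
have a_greedy : a \in greedy_set T r gamma s.
  by rewrite inE; apply/forallP => b; apply: a_max.
split=> [b|]; rewrite /greedy.
  by case: ifP; rewrite ?invr_ge0 ?ler0n.
have n_neq0 : #|greedy_set T r gamma s| != 0%N.
  by rewrite -lt0n card_gt0; apply/set0Pn; exists a.
by rewrite -big_mkcond /= sumr_const -[LHS]mulr_natr mulVf // pnatr_eq0.
Qed.

Lemma greedy_Qstar_const T r gamma s a :
  (forall b c, Qstar T r gamma s b = Qstar T r gamma s c) ->
  greedy T r gamma s a = #|A|%:R^-1.
Proof.
move=> Qstar_const; rewrite /greedy.
suff -> : greedy_set T r gamma s = [set: A]%SET by rewrite inE cardsT.
by apply/setP => b; rewrite !inE; apply/forallP => c; rewrite (Qstar_const c b).
Qed.

Lemma greedy_eq_rows T r gamma x y :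
  T x =2 T y -> r x =1 r y -> greedy T r gamma x = greedy T r gamma y.
Proof.
move=> Txy rxy.
have Qpi_xy pi a : Qpi T pi r gamma x a = Qpi T pi r gamma y a.
  by rewrite /Qpi rxy; under eq_bigr => s' _ do rewrite Txy.
have Qstar_xy : Qstar T r gamma x = Qstar T r gamma y.
  apply/funext => a; rewrite /Qstar; congr sup.
  by apply/seteqP; split=> _ [pi pi_pol <-]; exists pi; rewrite ?Qpi_xy.
by rewrite /greedy /greedy_set Qstar_xy.
Qed.

Definition relabel pi (x y : S) : S -> A -> R :=
  fun s => if s == y then pi x else pi s.

Lemma relabel_policy pi x y : is_policy pi -> is_policy (relabel pi x y).
Proof. by move=> pi_pol s; rewrite /relabel; case: ifP. Qed.

Section Relabel.
Variables (T : S -> A -> S -> R) (r : S -> A -> R) (pi : S -> A -> R) (x y : S).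
Hypotheses (Tyx : T y =2 T x) (ryx : r y =1 r x)
  (y_not_revisited : forall t, state_dist T pi (dirac_st R x) t.+1 y = 0).

Lemma relabel_off_y t s a :
  state_dist T pi (dirac_st R x) t.+1 s * relabel pi x y s a =
  state_dist T pi (dirac_st R x) t.+1 s * pi s a.
Proof.
by rewrite /relabel; case: eqP => [->|//]; rewrite y_not_revisited !mul0r.
Qed.

Lemma state_dist_relabel t :
  state_dist T (relabel pi x y) (dirac_st R y) t.+1
  =1 state_dist T pi (dirac_st R x) t.+1.
Proof.
elim: t => [|t IH] s'.
  rewrite !state_dist_dirac1 /relabel eqxx.
  by apply: eq_bigr => a _; rewrite Tyx.
rewrite !state_distS; apply: eq_bigr => s _; apply: eq_bigr => a _.
by rewrite IH relabel_off_y.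
Qed.

Lemma eta_val_relabel gamma :
  eta_val T (relabel pi x y) r gamma y = eta_val T pi r gamma x.
Proof.
rewrite !eta_valE; congr (limn (series _)); apply/funext => -[|t].
  rewrite !expected_reward_dirac0 /relabel eqxx.
  by congr (_ * _); apply: eq_bigr => a _; rewrite ryx.
congr (_ * _); apply: eq_bigr => s _; apply: eq_bigr => a _.
by rewrite state_dist_relabel relabel_off_y.
Qed.

End Relabel.

End FiniteMDP.

Section States.
Variable d : nat.

Lemma sti_inj : injective (@sti d).
Proof. by move=> i j []. Qed.

Lemma sum_state_sti (V : nmodType) (F : state d -> V) :
  F st0 = 0 -> F stg = 0 -> F stb = 0 -> \sum_s F s = \sum_i F (sti i).
Proof.
move=> F0 Fg Fb; rewrite -(big_imset _ (in2W sti_inj)) /=.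
rewrite (bigID [in [set sti i | i : 'I_d]]) /= [X in _ + X]big1 ?addr0 //.
by case=> // i; rewrite imset_f.
Qed.

Variable R : realType.
Implicit Types (s : state d) (a i : 'I_d) (theta : 'I_d -> R).

Lemma Tstar_st0 s a : Tstar R s a st0 = 0.
Proof. by case: s => [|i||] //; rewrite /Tstar /=; case: (i == a). Qed.

Lemma Tstar_sti_neq0 s a i : Tstar R s a (sti i) != 0 -> s = st0.
Proof.
case: s => [|j||] //; rewrite /Tstar /= ?eqxx //.
by case: (j == a); rewrite /= eqxx.
Qed.

Lemma Tstar_stg_neq0 s a : s != stg -> Tstar R s a stg != 0 -> s = sti a.
Proof.
case: s => [|i||] //; rewrite /Tstar /= ?eqxx //.
by case: (i =P a) => [->|_] /=; rewrite ?eqxx.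
Qed.

Lemma Tstar_sti_stg i a : Tstar R (sti i) a stg = dirac_st R i a.
Proof. by rewrite /Tstar /dirac_st /= (eq_sym a); case: (i == a). Qed.

Lemma Ttheta_st0 theta s a : Ttheta theta s a st0 = 0.
Proof. by case: s => [|i||] //; rewrite /= Tstar_st0. Qed.

Lemma Ttheta_sti_neq0 theta s a i : Ttheta theta s a (sti i) != 0 -> s = st0.
Proof. by case: s => [|j||] //=; [rewrite eqxx | exact: Tstar_sti_neq0 ..]. Qed.

End States.

Section Model.
Variables (R : realType) (d : nat) (theta : 'I_d -> R) (gamma : R).
Local Notation T := (Ttheta theta).

Lemma Ttheta_sti_not_revisited pi k t i :
  state_dist T pi (dirac_st R (sti k)) t.+1 (sti i) = 0.
Proof.
apply: state_dist_no_inflow => s a /Ttheta_sti_neq0 ->.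
case: t => [|t]; first by rewrite /= /dirac_st.
by apply: state_dist_no_inflow => s' a'; rewrite Ttheta_st0 eqxx.
Qed.

Lemma Qpi_Ttheta_st0 pi a :
  Qpi T pi (@rew R d) gamma st0 a
  = gamma * eta_val T pi (@rew R d) gamma (sti a).
Proof. by rewrite (Qpi_det _ _ _ (x := sti a)) ?add0r. Qed.

Lemma Qstar_Ttheta_st0 a b :
  Qstar T (@rew R d) gamma st0 a = Qstar T (@rew R d) gamma st0 b.
Proof.
suff Qpi_sub a' b' :
    [set Qpi T pi (@rew R d) gamma st0 a' | pi in @is_policy R _ _]
    `<=` [set Qpi T pi (@rew R d) gamma st0 b' | pi in @is_policy R _ _].
  by rewrite /Qstar; congr sup; apply/seteqP; split; apply: Qpi_sub.
move=> _ [pi pi_pol <-]; exists (relabel pi (sti a') (sti b')).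
  exact: relabel_policy.
rewrite !Qpi_Ttheta_st0 eta_val_relabel // => t.
exact: Ttheta_sti_not_revisited.
Qed.

Lemma greedy_Ttheta_st0 a : greedy T (@rew R d) gamma st0 a = d%:R^-1.
Proof. by rewrite greedy_Qstar_const ?card_ord //; apply: Qstar_Ttheta_st0. Qed.

Lemma greedy_Ttheta_sti i j :
  greedy T (@rew R d) gamma (sti i) = greedy T (@rew R d) gamma (sti j).
Proof. exact: greedy_eq_rows. Qed.

End Model.

Section TrueDynamics.
Variables (R : realType) (d : nat) (pi : state d -> 'I_d -> R).

Definition goal_prob : R := \sum_i pi st0 i * pi (sti i) i.

Hypothesis pi_pol : is_policy pi.
Local Notation dist := (state_dist (@Tstar R d) pi (dirac_st R st0)).

Lemma Tstar_dist_st0 t : dist t.+1 st0 = 0.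
Proof. by apply: state_dist_no_inflow => s a; rewrite Tstar_st0 eqxx. Qed.

Lemma Tstar_dist_sti t i : dist t.+2 (sti i) = 0.
Proof.
by apply: state_dist_no_inflow => s a /Tstar_sti_neq0 ->; apply: Tstar_dist_st0.
Qed.

Lemma Tstar_dist1 s : dist 1 s = if s is sti i then pi st0 i else 0.
Proof.
rewrite state_dist_dirac1; case: s => [|i||] /=;
  try by apply: big1 => a _; rewrite /Tstar /= mulr0.
rewrite -[RHS](sum_mul_dirac_st i (pi st0)).
by apply: eq_bigr => a _; rewrite /Tstar /= (inj_eq (@sti_inj d)) eq_sym.
Qed.

Lemma Tstar_dist_stg t : dist t.+2 stg = goal_prob.
Proof.
elim: t => [|t IH].
  rewrite state_distS sum_state_sti;
    try by apply: big1 => a _; rewrite Tstar_dist1 !mul0r.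
  apply: eq_bigr => i _; rewrite Tstar_dist1.
  under eq_bigr => a _ do rewrite Tstar_sti_stg -mulrA.
  by rewrite -big_distrr /= sum_mul_dirac_st.
rewrite state_dist_absorbing // => s a sg /(Tstar_stg_neq0 sg) ->.
exact: Tstar_dist_sti.
Qed.

Lemma eta_Tstar_st0 gamma : 0 <= gamma < 1 ->
  eta_val (@Tstar R d) pi (@rew R d) gamma st0
  = gamma ^+ 2 * goal_prob / (1 - gamma).
Proof.
move=> /andP[gamma_ge0 gamma_lt1]; rewrite eta_valE.
apply: lim_series_discounted_delayed; first by rewrite ger0_norm.
- by case=> [|[|//]] _; rewrite expected_reward_indicator // Tstar_dist1.
- by move=> t; rewrite addn2 expected_reward_indicator // Tstar_dist_stg.
Qed.

Lemma goal_prob_le1 : goal_prob <= 1.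
Proof.
rewrite /goal_prob -(proj2 (pi_pol st0)); apply: ler_sum => i _.
by rewrite ler_piMr ?(proj1 (pi_pol st0)) ?policy_le1.
Qed.

End TrueDynamics.

Section Values.
Variables (R : realType) (d : nat) (gamma : R).
Hypotheses (d_gt0 : (0 < d)%N) (gamma01 : 0 <= gamma < 1).

Lemma opt_value_Tstar_st0 :
  opt_value (@Tstar R d) (@rew R d) gamma st0 = gamma ^+ 2 / (1 - gamma).
Proof.
have [gamma_ge0 gamma_lt1] := andP gamma01.
pose i0 := Ordinal d_gt0.
pose pi_match s : 'I_d -> R := dirac_st R (if s is sti i then i else i0).
have match_pol : is_policy pi_match by apply: dirac_policy.
rewrite /opt_value; set E := [set eta_val _ _ _ _ _ | _ in _].
have E_ub : ubound E (gamma ^+ 2 / (1 - gamma)).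
  move=> _ [pi pi_pol <-]; rewrite eta_Tstar_st0 //.
  apply: ler_wpM2r; first by rewrite invr_ge0 subr_ge0 ltW.
  by rewrite ler_piMr ?exprn_ge0 ?goal_prob_le1.
have E_match : E (gamma ^+ 2 / (1 - gamma)).
  exists pi_match => //; rewrite eta_Tstar_st0 // /goal_prob.
  under eq_bigr => i _ do rewrite /pi_match /dirac_st eqxx mulr1.
  by rewrite (proj2 (match_pol st0)) mulr1.
apply/eqP; rewrite eq_le ge_sup //=; last by exists (gamma ^+ 2 / (1 - gamma)).
by rewrite (ub_le_sup _ E_match) //; exists (gamma ^+ 2 / (1 - gamma)).
Qed.

Lemma goal_prob_greedy_Ttheta theta :
  goal_prob (greedy (Ttheta theta) (@rew R d) gamma) = d%:R^-1.
Proof.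
pose i0 := Ordinal d_gt0.
rewrite /goal_prob.
under eq_bigr => i _ do
  rewrite greedy_Ttheta_st0 (greedy_Ttheta_sti _ _ i i0).
by rewrite -big_distrr /= (proj2 (greedy_is_policy _ _ _ i0 (sti i0))) mulr1.
Qed.

End Values.

Theorem theorem2 (R : realType) (d : nat) (gamma : R) (theta : 'I_d -> R) :
  (1 <= d)%N -> 0 <= gamma < 1 -> (forall j, -1 <= theta j <= 1) ->
  opt_value (@Tstar R d) (@rew R d) gamma st0
    - eta_val (@Tstar R d) (greedy (Ttheta theta) (@rew R d) gamma) (@rew R d) gamma st0
  >= ((d%:R - 1) * gamma ^+ 2) / (d%:R * (1 - gamma)).
Proof.
move=> d_gt0 gamma01 _.
have greedy_pol := greedy_is_policy (Ttheta theta) (@rew R d) gamma (Ordinal d_gt0).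
rewrite opt_value_Tstar_st0 // eta_Tstar_st0 // goal_prob_greedy_Ttheta //.
have [_ gamma_lt1] := andP gamma01.
rewrite le_eqVlt; apply/orP; left; apply/eqP; field.
by rewrite subr_eq0 gt_eqF // pnatr_eq0 -lt0n d_gt0.
Qed.
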